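(* Let $(F_n)_{n\ge1}$ be the Fibonacci sequence ($F_1=F_2=1$, $F_{n+2}=F_{n+1}+F_n$). For a positive integer $n$ let $g(n):=\gcd(n,F_n)$, let $z(n)$ be the smallest positive integer $k$ such that $n\mid F_k$, and let $\ell(n):=\operatorname{lcm}(n,z(n))$. Let $\mathcal{A}:=\{g(n): n\ge1\}$. Then for all positive integers $m,n$ and all primes $p$: (i) if $m\mid n$ then $g(m)\mid g(n)$; (ii) $n\mid g(m)$ if and only if $\ell(n)\mid m$; (iii) $n\in\mathcal{A}$ if and only if $n=g(\ell(n))$; (iv) if $\ell(p)\mid \ell(n)$ and $n\in\mathcal{A}$, then $p\mid n$; (v) $\ell(p)=p\,z(p)$ if $p\ne 5$, and $\ell(5)=5$; (vi) if $p\neq 3$ and $\ell(q)\nmid z(p)$ for all primes $q$, then $p\in\mathcal{A}$. *)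

From mathcomp Require Import all_boot.
From Stdlib Require Import ClassicalEpsilon.
Set Implicit Arguments. Unset Strict Implicit. Unset Printing Implicit Defensive.

Fixpoint fib (n : nat) : nat :=
  match n with
  | 0 => 0
  | S m => match m with 0 => 1 | S k => fib m + fib k end
  end.

Definition g (n : nat) : nat := gcdn n (fib n).

(* z(n) = least k > 0 with n | F_k (rank of apparition).  Such a k always
   exists for n >= 1 (a theorem); if it did not, we default to 0. *)
Definition z (n : nat) : nat :=
  match excluded_middle_informative (exists k, (0 < k) && (n %| fib k)) with
  | left H => ex_minn H
  | right _ => 0
  end.

Definition ell (n : nat) : nat := lcmn n (z n).

Definition inA (a : nat) : Prop := exists n, 0 < n /\ a = g n.

(* Fibonacci numbers are a strong divisibility sequence: n | F_k exactly when
   z(n) | k.  This turns (i)-(iv) into gcd/lcm bookkeeping.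

   For a prime p other than 2 and 5, the matrix M = [[1,1],[1,0]] over F_p
   satisfies (2M - 1)^2 = 5, so Frobenius gives (2M)^p = 1 + e (2M - 1) with
   e = 5^((p-1)/2) = +-1; the diagonal entries of M^p are F_(p+1) and F_(p-1),
   so p divides one of them.  Hence z(p) <= p + 1 and p does not divide z(p)
   (p <> 5), which is (v).

   For (vi), let a prime q divide both g(l(p)) and z(p).  Then l(q) | p z(p),
   so either z(q) | z(p), whence l(q) | z(p), or p | z(q); in the latter case
   p <= z(q) <= q + 1 and q <= z(p) <= p + 1 force {p, q} = {2, 3}.  Thus
   g(l(p)) is coprime to z(p) and divides l(p) = p z(p), so it equals p. *)

From mathcomp Require Import all_boot all_algebra finfield ring zify.
From Stdlib Require Import ClassicalEpsilon.
Set Implicit Arguments. Unset Strict Implicit. Unset Printing Implicit Defensive.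
Import GRing.Theory.

Lemma fibSS n : fib n.+2 = fib n.+1 + fib n. Proof. by []. Qed.
Arguments fib : simpl never.

Lemma fibD m n : fib (m + n.+1) = fib m.+1 * fib n.+1 + fib m * fib n.
Proof.
elim: m n => [|m IH] n; first by rewrite add0n mul1n mul0n addn0.
rewrite addSnnS IH !fibSS !mulnDl !mulnDr; lia.
Qed.

Lemma coprime_fibS n : coprime (fib n) (fib n.+1).
Proof. by elim: n => // n IH; rewrite /coprime fibSS gcdnDl gcdnC. Qed.

Lemma dvdn_fibM a b : fib a %| fib (a * b).
Proof.
elim: b => [|b IH]; first by rewrite muln0 dvdn0.
case: a IH => // a IH; rewrite mulnS addnC fibD.
by apply: dvdn_add; [apply: dvdn_mull | apply: dvdn_mulr].
Qed.

Lemma dvdn_fib a b : a %| b -> fib a %| fib b.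
Proof. by case/dvdnP=> c ->; rewrite mulnC dvdn_fibM. Qed.

Lemma dvdn_fib_of_eqmod n i d :
  fib i = fib (i + d) %[mod n] -> fib i.+1 = fib (i + d).+1 %[mod n] -> n %| fib d.
Proof.
elim: i => [|i IH] Ei ESi; first by rewrite /dvdn -Ei mod0n.
rewrite addSn !fibSS in Ei ESi; apply: IH => //.
by apply/eqP; rewrite -(eqn_modDl (fib (i + d).+1)) -modnDml -Ei modnDml ESi.
Qed.

Lemma exists_dvdn_fib n : 0 < n -> exists k, (0 < k) && (n %| fib k).
Proof.
move=> n_gt0.
pose pair_mod (i : 'I_(n * n).+1) :=
  (Ordinal (ltn_pmod (fib i) n_gt0), Ordinal (ltn_pmod (fib i.+1) n_gt0)).
have /injectivePn[i [j neq_ij eq_ij]] : ~~ injectiveb pair_mod.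
  apply/injectiveP => /leq_card; rewrite card_prod !card_ord; lia.
have [Ei ESi] : fib i = fib j %[mod n] /\ fib i.+1 = fib j.+1 %[mod n].
  by case: eq_ij.
clear pair_mod eq_ij.
wlog lt_ij : i j neq_ij Ei ESi / i < j.
  move=> W; case: (ltngtP i j) => [lt_ij | lt_ji | /val_inj eq_ij].
  - exact: W neq_ij Ei ESi lt_ij.
  - by apply: (W j i) => //; rewrite eq_sym.
  - by rewrite eq_ij eqxx in neq_ij.
exists (j - i); rewrite subn_gt0 lt_ij /=.
by apply: (@dvdn_fib_of_eqmod n i); rewrite subnKC // ltnW.
Qed.

Lemma zP n : 0 < n ->
  [/\ 0 < z n, n %| fib (z n) & forall k, 0 < k -> n %| fib k -> z n <= k].
Proof.
move=> n_gt0; rewrite /z; case: excluded_middle_informative => [ex|]; last first.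
  by move/(_ (exists_dvdn_fib n_gt0)).
case: ex_minnP => m /andP[m_gt0 dvd_m] min_m; split=> // k k_gt0 dvd_k.
by apply: min_m; rewrite k_gt0.
Qed.

Lemma z_gt0 n : 0 < n -> 0 < z n.
Proof. by case/zP. Qed.

Lemma dvdn_fib_z n k : 0 < n -> (n %| fib k) = (z n %| k).
Proof.
move=> n_gt0; have [z_gt0 dvd_z min_z] := zP n_gt0.
apply/idP/idP => [dvd_k|/dvdn_fib]; last exact: dvdn_trans.
set q := k %/ z n * z n; have k_eq : k = q + k %% z n := divn_eq k (z n).
have dvd_q : n %| fib q by apply: dvdn_trans dvd_z (dvdn_fib (dvdn_mull _ _)).
have cop_q : coprime n (fib q.+1) by apply: coprime_dvdl dvd_q (coprime_fibS q).
rewrite k_eq dvdn_addr ?dvdn_mull //; have := ltn_pmod k z_gt0.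
move: dvd_k; rewrite {1}k_eq; case: (k %% z n) => // r.
rewrite fibD dvdn_addl; last exact: dvdn_mulr.
rewrite Gauss_dvdr // => /(min_z _ (ltn0Sn r)).
by rewrite leqNgt => /negPf->.
Qed.

Section FibonacciMatrix.
Local Open Scope ring_scope.
Variable R : nzRingType.

Definition fibmx : 'M[R]_2 := \matrix_(i, j) (fib (2 - i - j))%:R.

Lemma fibmx_pow n : fibmx ^+ n.+1 = \matrix_(i, j) (fib (n.+2 - i - j))%:R.
Proof.
elim: n => [|n IH]; first by rewrite expr1.
rewrite exprSr IH -mulmxE; apply/matrixP => i j; rewrite !mxE !big_ord_recl big_ord0 !mxE /=.
case: i => [[|[|//]]] ?; case: j => [[|[|//]]] ? /=;
  by rewrite ?mulr1 ?mulr0 ?addr0 ?add0r -?natrD ?subn1 -?fibSS.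
Qed.

End FibonacciMatrix.

Lemma fibmx_sqrt5 (R : comNzRingType) : ((fibmx R *+ 2 - 1) ^+ 2 = 5%:M)%R.
Proof.
apply/matrixP => i j; rewrite expr2 -mulmxE !mxE !big_ord_recl big_ord0 !mxE /=.
case: i => [[|[|//]]] ?; case: j => [[|[|//]]] ? /=; rewrite /fib /=; ring.
Qed.

Section FibonacciModPrime.
Variable p : nat.
Hypotheses (p_pr : prime p) (p_neq2 : p != 2) (p_neq5 : p != 5).
Local Open Scope ring_scope.

Let p_half : p = (p./2).*2.+1.
Proof.
have p_odd : odd p by apply: contraNT p_neq2 => /(prime_oddPn p_pr)->.
by rewrite -[LHS]odd_double_half p_odd.
Qed.

Let sqrt5 : 'M['F_p]_2 := fibmx 'F_p *+ 2 - 1.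

Let e : 'F_p := 5%:R ^+ p./2.

Lemma pow_fibmx2_prime : (fibmx 'F_p *+ 2) ^+ p = 1 + e *: sqrt5.
Proof.
have pchar_p : p \in [pchar 'M['F_p]_2] by rewrite pchar_lalg pchar_Fp.
have -> : fibmx 'F_p *+ 2 = 1 + sqrt5 by rewrite addrC subrK.
rewrite -(pFrobenius_autE pchar_p) pFrobenius_autD_comm; last exact/commr_sym/commr1.
rewrite pFrobenius_aut1 pFrobenius_autE; congr (_ + _).
have sqrt5_odd_pow k : sqrt5 ^+ k.*2.+1 = 5%:R ^+ k *: sqrt5.
  by rewrite exprS -mul2n exprM fibmx_sqrt5 -scalemx1 exprZn expr1n -scalerAr mulr1.
by rewrite -sqrt5_odd_pow -p_half.
Qed.

Lemma pow5_half_pm1 : (e == 1) || (e == -1).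
Proof.
have five_neq0 : (5%:R : 'F_p) != 0 by rewrite -(dvdn_pcharf (pchar_Fp p_pr)) dvdn_prime2.
rewrite -sqrf_eq1 -exprM mulnC mul2n; apply/eqP/(mulIf five_neq0).
by rewrite mul1r -exprSr -p_half -[RHS](expf_card (5%:R : 'F_p)) card_Fp.
Qed.

Lemma fib_succ_pred_Fp :
  (2 ^ p * fib p.+1)%:R = 1 + e :> 'F_p /\ (2 ^ p * fib p.-1)%:R = 1 - e :> 'F_p.
Proof.
have fibmx_pow_p : fibmx 'F_p ^+ p = \matrix_(i, j) (fib (p.+1 - i - j))%:R.
  by have := fibmx_pow 'F_p p.-1; rewrite prednK ?prime_gt0.
have := pow_fibmx2_prime; rewrite (exprMn_n (fibmx 'F_p)) fibmx_pow_p.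
move/matrixP=> E; rewrite mulnC natrM mulr_natr mulnC natrM mulr_natr; split.
  have := E ord0 ord0; rewrite mulmxnE !mxE /= -[fib (2 - 0 - 0)]/1%N !subn0 => ->.
  by rewrite addrK mulr1.
have := E ord_max ord_max; rewrite mulmxnE !mxE -[fib (2 - _ - _)]/0%N /= !subn1 /= => ->.
by rewrite addr0 sub0r mulrN1.
Qed.

Lemma prime_dvd_fib_pred_or_succ : (p %| fib p.-1)%N || (p %| fib p.+1)%N.
Proof.
have dvd_Fp n : (p %| n)%N = ((2 ^ p * n)%:R == 0 :> 'F_p).
  rewrite -(dvdn_pcharf (pchar_Fp p_pr)) Euclid_dvdM // Euclid_dvdX //.
  by rewrite (dvdn_prime2 p_pr (isT : prime 2)) (negbTE p_neq2).
have [fib_succ fib_pred] := fib_succ_pred_Fp.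
by case/orP: pow5_half_pm1 => /eqP e_pm1; rewrite !dvd_Fp ?fib_pred ?fib_succ e_pm1 subrr eqxx ?orbT.
Qed.
End FibonacciModPrime.

Lemma z5 : z 5 = 5.
Proof.
have [_ dvd_z _] := zP (isT : 0 < 5).
have z_neq1 : z 5 != 1 by apply: contraTneq dvd_z => ->.
by apply/(prime_nt_dvdP (isT : prime 5) z_neq1); rewrite -dvdn_fib_z.
Qed.

Lemma z_prime_dvd p : prime p -> p != 5 -> (z p %| p.-1) || (z p %| p.+1).
Proof.
move=> p_pr p_neq5; rewrite -!dvdn_fib_z ?prime_gt0 //.
have [->|p_neq2] := eqVneq p 2; first by rewrite orbC.
exact: prime_dvd_fib_pred_or_succ.
Qed.

Lemma coprime_z_prime p : prime p -> p != 5 -> coprime p (z p).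
Proof.
move=> p_pr p_neq5; have p_gt1 := prime_gt1 p_pr.
rewrite prime_coprime //; apply/negP => dvd_pz.
case/orP: (z_prime_dvd p_pr p_neq5) => /(dvdn_trans dvd_pz).
  by move/dvdn_leq; lia.
by rewrite -addn1 dvdn_addr // dvdn1 => /eqP p1; rewrite p1 in p_gt1.
Qed.

Lemma z_prime_le p : prime p -> z p <= p.+1.
Proof.
move=> p_pr; have [->|p_neq5] := eqVneq p 5; first by rewrite z5.
have p_gt1 := prime_gt1 p_pr.
by case/orP: (z_prime_dvd p_pr p_neq5) => /dvdn_leq; lia.
Qed.

Lemma dvdn_g m n : m %| n -> g m %| g n.
Proof.
move=> dvd_mn; rewrite dvdn_gcd (dvdn_trans (dvdn_gcdl _ _) dvd_mn).
exact: dvdn_trans (dvdn_gcdr _ _) (dvdn_fib dvd_mn).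
Qed.

Lemma dvdn_g_ell m n : 0 < n -> (n %| g m) = (ell n %| m).
Proof. by move=> n_gt0; rewrite dvdn_gcd dvdn_lcm dvdn_fib_z. Qed.

Lemma ell_gt0 n : 0 < n -> 0 < ell n.
Proof. by move=> n_gt0; rewrite lcmn_gt0 n_gt0 z_gt0. Qed.

Lemma inA_g_ell n : 0 < n -> inA n <-> n = g (ell n).
Proof.
move=> n_gt0; split=> [[m [m_gt0 ->]]|n_eq]; last by exists (ell n); rewrite ell_gt0.
have gm_gt0 : 0 < g m by rewrite gcdn_gt0 m_gt0.
apply/eqP; rewrite eqn_dvd dvdn_g_ell // dvdnn /=.
by apply: dvdn_g; rewrite -dvdn_g_ell.
Qed.

Lemma dvdn_of_ell_dvdn_inA d n : 0 < d -> ell d %| ell n -> inA n -> d %| n.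
Proof.
move=> d_gt0 dvd_ell A_n.
have n_gt0 : 0 < n by case: A_n => m [m_gt0 ->]; rewrite gcdn_gt0 m_gt0.
rewrite (inA_g_ell n_gt0).1 //; apply: dvdn_trans (dvdn_g dvd_ell).
by rewrite dvdn_g_ell.
Qed.

Lemma ell_prime p : prime p -> p != 5 -> ell p = p * z p.
Proof.
move=> p_pr p_neq5; have := muln_lcm_gcd p (z p).
by rewrite (eqP (coprime_z_prime p_pr p_neq5)) muln1.
Qed.

Lemma ell5 : ell 5 = 5.
Proof. by rewrite /ell z5. Qed.

Lemma addn_adjacent_primes p q :
  prime p -> prime q -> p != q -> p <= q.+1 -> q <= p.+1 -> p + q = 5.
Proof.
move=> p_pr q_pr neq_pq le_pq le_qp.
have := prime_gt1 p_pr; have := prime_gt1 q_pr.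
by case: (even_prime p_pr); case: (even_prime q_pr); lia.
Qed.

Lemma ell_dvdn_z_of_common_prime p q : prime p -> 3 < p -> p != 5 -> prime q ->
  q %| g (ell p) -> q %| z p -> ell q %| z p.
Proof.
move=> p_pr p_gt3 p_neq5 q_pr dvd_qg dvd_qz.
have neq_pq : p != q.
  by apply: contraTneq dvd_qz => <-; rewrite -prime_coprime // coprime_z_prime.
have dvd_zq : z q %| p * z p.
  rewrite -ell_prime //; apply: dvdn_trans (dvdn_lcmr q (z q)) _.
  by rewrite -dvdn_g_ell ?prime_gt0.
have [dvd_pzq|ndvd_pzq] := boolP (p %| z q).
  have le_pq := leq_trans (dvdn_leq (z_gt0 (prime_gt0 q_pr)) dvd_pzq) (z_prime_le q_pr).
  have le_qp := leq_trans (dvdn_leq (z_gt0 (prime_gt0 p_pr)) dvd_qz) (z_prime_le p_pr).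
  have := leq_add p_gt3 (prime_gt1 q_pr).
  by rewrite (addn_adjacent_primes p_pr q_pr neq_pq le_pq le_qp).
by rewrite dvdn_lcm dvd_qz -(@Gauss_dvdr _ p) // coprime_sym prime_coprime.
Qed.

Lemma inA_prime p : prime p -> p != 3 -> (forall q, prime q -> ~~ (ell q %| z p)) -> inA p.
Proof.
move=> p_pr p_neq3 no_ell.
have [->|p_neq2] := eqVneq p 2; first by exists 6.
have [->|p_neq5] := eqVneq p 5; first by exists 5.
have p_gt0 := prime_gt0 p_pr; have p_gt3 : 3 < p by have := prime_gt1 p_pr; lia.
apply/(inA_g_ell p_gt0); set d := g (ell p).
have dvd_pd : p %| d by rewrite dvdn_g_ell.
have cop_dz : coprime d (z p).
  have d_gt0 : 0 < d by rewrite gcdn_gt0 ell_gt0.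
  rewrite /coprime eqn_leq gcdn_gt0 d_gt0 andbT leqNgt; apply/negP.
  case/pdivP => q q_pr; rewrite dvdn_gcd => /andP[dvd_qd dvd_qz].
  by have := no_ell q q_pr; rewrite ell_dvdn_z_of_common_prime.
have dvd_dp : d %| p by rewrite -(Gauss_dvdl _ cop_dz) -ell_prime // dvdn_gcdl.
by apply/eqP; rewrite eqn_dvd dvd_pd dvd_dp.
Qed.

Theorem lemma2p2 :
  forall (m n p : nat), 0 < m -> 0 < n -> prime p ->
    (m %| n -> g m %| g n) /\
    (n %| g m <-> ell n %| m) /\
    (inA n <-> n = g (ell n)) /\
    (ell p %| ell n -> inA n -> p %| n) /\
    ((p != 5 -> ell p = p * z p) /\ ell 5 = 5) /\
    (p != 3 -> (forall q, prime q -> ~~ (ell q %| z p)) -> inA p).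
Proof.
move=> m n p _ n_gt0 p_pr.
split; first exact: dvdn_g.
split; first by rewrite dvdn_g_ell.
split; first exact: inA_g_ell.
split; first exact: dvdn_of_ell_dvdn_inA (prime_gt0 p_pr).
split; first by split; [exact: ell_prime | exact: ell5].
exact: inA_prime.
Qed.
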